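(* In the multi-sender unicast index-coding instance with $N=4$ messages, $K=15$ senders whose message sets are all $15$ nonempty subsets of $\{1,2,3,4\}$, each with link capacity $1$, and side information $\mathcal A_1=\{4\}$, $\mathcal A_2=\{3,4\}$, $\mathcal A_3=\{1,2\}$, $\mathcal A_4=\{2,3\}$, every achievable rate tuple satisfies $R_1+R_2+R_3\le 18$.
   Context: Model. $N$ independent messages $M_1,\dots,M_N$, $M_j$ uniform on $[1:2^{nR_j}]$ ($n$ the block length). Sender $k$ knows the messages $M_i$, $i\in\mathcal S_k$, and sends an index $L_k=f_k((M_i)_{i\in\mathcal S_k})\in[1:2^{nC_k})=\{1,\dots,2^{\lfloor nC_k\rfloor}\}$ over a noiseless broadcast link reaching all receivers. Receiver $j$ knows $M_i$, $i\in\mathcal A_j$, and must output an estimate $\hat M_j=g_j(L_1,\dots,L_K,(M_i)_{i\in\mathcal A_j})$ of $M_j$. A rate tuple is achievable if there exist such codes with $\Pr[(\hat M_1,\dots,\hat M_N)\ne(M_1,\dots,M_N)]\to0$ as $n\to\infty$. *)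

From Stdlib Require Import Reals List Arith ZArith.
Import ListNotations.
Open Scope R_scope.

(* Messages and senders are 0-indexed: message index i in {0..N-1}
   stands for M_(i+1); sender index k in {0..K-1} stands for sender k+1.
   A message tuple is a list of nats of length N; message i takes values
   in {0, ..., size_i - 1} (a relabelling of [1 : size_i]). *)

Definition nfloor (x : R) : nat := Z.to_nat (Int_part x).

(* |[1 : 2^{nR}]| = floor(2^{nR}) *)
Definition msg_size (n : nat) (r : R) : nat := nfloor (Rpower 2 (INR n * r)).

(* |[1 : 2^{nC})| = 2^{floor(nC)} *)
Definition link_size (n : nat) (c : R) : nat := 2 ^ nfloor (INR n * c).

Fixpoint tuples (sizes : list nat) : list (list nat) :=
  match sizes with
  | nil => [nil]
  | s :: ss => flat_map (fun x => map (cons x) (tuples ss)) (seq 0 s)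
  end.

(* A code: encoder of sender k applied to the full message tuple,
   decoder of receiver j applied to the list of link indices and the full
   message tuple; locality constraints are imposed in [valid_code]. *)
Record code := mkCode {
  enc : nat -> list nat -> nat;
  dec : nat -> list nat -> list nat -> nat }.

Definition msg_sizes (N n : nat) (Rt : nat -> R) : list nat :=
  map (fun j => msg_size n (Rt j)) (seq 0 N).

Definition agree_on (P : nat -> bool) (N : nat) (m m' : list nat) : Prop :=
  forall i, (i < N)%nat -> P i = true -> nth i m 0%nat = nth i m' 0%nat.

Definition valid_code (N K : nat) (S A : nat -> nat -> bool) (C : nat -> R)
  (n : nat) (Rt : nat -> R) (c : code) : Prop :=
  (forall k m m', (k < K)%nat -> agree_on (S k) N m m' -> enc c k m = enc c k m') /\
  (forall k m, (k < K)%nat -> In m (tuples (msg_sizes N n Rt)) ->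
      (enc c k m < link_size n (C k))%nat) /\
  (forall j L m m', (j < N)%nat -> agree_on (A j) N m m' -> dec c j L m = dec c j L m').

Definition links (K : nat) (c : code) (m : list nat) : list nat :=
  map (fun k => enc c k m) (seq 0 K).

Definition error (N K : nat) (c : code) (m : list nat) : bool :=
  existsb (fun j => negb (Nat.eqb (dec c j (links K c m) m) (nth j m 0%nat))) (seq 0 N).

(* Pr[(hatM_1..hatM_N) <> (M_1..M_N)] under uniform independent messages *)
Definition err_prob (N K n : nat) (Rt : nat -> R) (c : code) : R :=
  INR (length (filter (error N K c) (tuples (msg_sizes N n Rt))))
  / INR (length (tuples (msg_sizes N n Rt))).

Definition achievable (N K : nat) (S A : nat -> nat -> bool) (C : nat -> R)
  (Rt : nat -> R) : Prop :=
  (forall j, (j < N)%nat -> 0 <= Rt j) /\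
  exists codes : nat -> code,
    (forall n, valid_code N K S A C n Rt (codes n)) /\
    Un_cv (fun n => err_prob N K n Rt (codes n)) 0.

(* sender k (k = 0..14) knows message i iff bit i of k+1 is set:
   this runs over all 15 nonempty subsets of {1,2,3,4}. *)
Definition S_inst (k i : nat) : bool := Nat.testbit (S k) i.
Definition A_inst (j i : nat) : bool :=
  match j with
  | 0 => Nat.eqb i 3
  | 1 => Nat.eqb i 2 || Nat.eqb i 3
  | 2 => Nat.eqb i 0 || Nat.eqb i 1
  | 3 => Nat.eqb i 1 || Nat.eqb i 2
  | _ => false
  end%bool.
Definition C_inst (k : nat) : R := 1.

(* Fix a code whose error probability is
   below 1/8 and call b an alias of a correctly decoded tuple t = (m0, m1, m2, m3) if replacing
   m1 by b leaves unchanged the links of every sender that does not know m2.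

   Many aliases are rare: from (m0, m2, m3, b) and the four links of the senders knowing both
   m1 and m2, all fifteen links of t are known, and receiver 1 (side information m2, m3) then
   recovers m1.  So the pairs (t, b) number at most s0 s1 s2 s3 2^(4n).

   Few aliases are rare too: m3 and the fourteen links other than that of the sender knowing
   only m3 determine m0 (receiver 0), and then m1 determines m2 (receiver 2).  Within such a
   class the values of m1 are aliases of one another, so the tuples with at most T aliases
   number at most s3 2^(14n) T.

   With T = 4 2^(4n) the two counts give s0 s1 s2 = O(2^(18n)). *)

From Stdlib Require Import Reals Lra ZArith.
From mathcomp Require Import ssreflect ssrfun ssrbool eqtype ssrnat seq fintype finfun bigop finset.
From mathcomp Require Import zify.
Set Implicit Arguments. Unset Strict Implicit.
Open Scope nat_scope.

Lemma seq_iota a b : List.seq a b = iota a b.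
Proof. by elim: b a => //= b IH a; rewrite IH. Qed.

Lemma length_filter_tuples_cons (p : list nat -> bool) s ss :
  length (List.filter p (tuples (s :: ss))) =
  \sum_(x < s) length (List.filter (fun r => p ((x : nat) :: r)) (tuples ss)).
Proof.
rewrite /= seq_iota -(big_mkord xpredT (fun x => length (List.filter (fun r => p (x :: r)) (tuples ss)))).
rewrite /index_iota subn0.
elim: (iota 0 s) => [|x l IH]; first by rewrite big_nil.
rewrite big_cons /= List.filter_app List.length_app IH; congr addn.
by elim: (tuples ss) => //= r rs IHr; case: (p (x :: r)); rewrite /= IHr.
Qed.

Lemma in_tuples_cons x r s ss :
  List.In (x :: r) (tuples (s :: ss)) <-> x < s /\ List.In r (tuples ss).
Proof.
rewrite /= List.in_flat_map; split.
- case=> y [/List.in_seq hy /List.in_map_iff [r' [[<- <-] hr']]]; split=> //; apply/ltP; lia.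
- case=> /ltP hx hr; exists x; split; first by apply/List.in_seq; lia.
  by apply/List.in_map_iff; exists r.
Qed.

Definition msgs (s0 s1 s2 s3 : nat) := ('I_s0 * 'I_s1 * 'I_s2 * 'I_s3)%type.

Definition msg_list s0 s1 s2 s3 (t : msgs s0 s1 s2 s3) : list nat :=
  [:: (t.1.1.1 : nat); (t.1.1.2 : nat); (t.1.2 : nat); (t.2 : nat)].

Lemma msg_list_in_tuples s0 s1 s2 s3 (t : msgs s0 s1 s2 s3) :
  List.In (msg_list t) (tuples [:: s0; s1; s2; s3]).
Proof. by rewrite !in_tuples_cons; do 4 (split; first exact: ltn_ord); left. Qed.

Lemma length_filter_tuples4 s0 s1 s2 s3 (p : list nat -> bool) :
  length (List.filter p (tuples [:: s0; s1; s2; s3])) =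
  #|[set t : msgs s0 s1 s2 s3 | p (msg_list t)]|.
Proof.
rewrite -sum1dep_card big_mkcond.
rewrite -(pair_bigA _ (fun x (d : 'I_s3) => if p (msg_list (x, d)) then 1 else 0)).
rewrite -(pair_bigA _ (fun x (c : 'I_s2) => \sum_(d < s3) if p (msg_list (x, c, d)) then 1 else 0)).
rewrite -(pair_bigA _ (fun (a : 'I_s0) (b : 'I_s1) =>
  \sum_(c < s2) \sum_(d < s3) if p (msg_list (a, b, c, d)) then 1 else 0)).
rewrite length_filter_tuples_cons; apply: eq_bigr => a _.
rewrite length_filter_tuples_cons; apply: eq_bigr => b _.
rewrite length_filter_tuples_cons; apply: eq_bigr => c _.
rewrite length_filter_tuples_cons; apply: eq_bigr => d _.
by rewrite /=; case: (p _).
Qed.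

Lemma links_eq K c m m' :
  (forall k, (k < K)%coq_nat -> enc c k m = enc c k m') -> links K c m = links K c m'.
Proof.
by move=> h; apply: List.map_ext_in => k /List.in_seq hk; apply: h; lia.
Qed.

Lemma dec_no_error N K c m j :
  ~~ error N K c m -> (j < N)%coq_nat -> dec c j (links K c m) m = List.nth j m 0.
Proof.
move=> ok hj; apply/PeanoNat.Nat.eqb_eq; apply: contraNT ok => wrong.
by apply/List.existsb_exists; exists j; split; [apply/List.in_seq; lia | rewrite wrong].
Qed.

Lemma decoded_eq N K (A : nat -> nat -> bool) c m m' j :
  (forall j L m m', (j < N)%coq_nat -> agree_on (A j) N m m' -> dec c j L m = dec c j L m') ->
  (j < N)%coq_nat -> ~~ error N K c m -> ~~ error N K c m' ->
  links K c m = links K c m' -> agree_on (A j) N m m' -> List.nth j m 0 = List.nth j m' 0.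
Proof.
move=> dec_local hj ok ok' el ag.
by rewrite -(dec_no_error ok hj) -(dec_no_error ok' hj) el; apply: dec_local.
Qed.

Lemma card_le_fibers (T K : finType) (f : T -> K) (D : {set T}) m :
  (forall k, #|[set t in D | f t == k]| <= m) -> #|D| <= #|K| * m.
Proof.
move=> fib; rewrite -sum1_card (partition_big f predT) //= -sum_nat_const.
by apply: leq_sum => k _; rewrite sum1dep_card.
Qed.

Lemma markov_card (T : finType) (D : {set T}) (f : T -> nat) m :
  #|[set t in D | m < f t]| * m.+1 <= \sum_(t in D) f t.
Proof.
rewrite -sum_nat_const big_mkcond [X in _ <= X]big_mkcond /=.
by apply: leq_sum => t _; rewrite !inE; case: (t \in D) => //=; case: ltnP.
Qed.

Lemma count_by_threshold (T : finType) (G : {set T}) (f : T -> nat) a B :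
  0 < B -> 8 * #|~: G| <= #|T| ->
  (forall m, #|[set t in G | f t <= m]| <= a * m) ->
  \sum_(t in G) f t <= #|T| * B -> 5 * #|T| <= 32 * (a * B).
Proof.
move=> B_gt0 few_bad few_small sum_small.
set few := [set t in G | f t <= 4 * B]; set many := [set t in G | 4 * B < f t].
have many_small : 4 * #|many| <= #|T|.
  rewrite -(leq_pmul2r B_gt0); have := leq_trans (markov_card G f (4 * B)) sum_small.
  by rewrite -/many (mulnC 4) -mulnA mulnS; lia.
have G_split : #|G| <= #|few| + #|many|.
  apply: leq_trans (leq_card_setU _ _); apply/subset_leq_card/subsetP => t tG.
  by rewrite !inE tG /=; case: leqP.
have := few_small (4 * B); have := cardsC G; rewrite -/few mulnCA; lia.
Qed.

Section FixedCode.

Variables (c : code) (n s0 s1 s2 s3 : nat).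
Local Notation Msg := (msgs s0 s1 s2 s3).

Hypothesis enc_local : forall k m m', (k < 15)%coq_nat ->
  agree_on (S_inst k) 4 m m' -> enc c k m = enc c k m'.
Hypothesis enc_lt : forall (k : 'I_15) (t : Msg), enc c k (msg_list t) < 2 ^ n.
Hypothesis dec_local : forall j L m m', (j < 4)%coq_nat ->
  agree_on (A_inst j) 4 m m' -> dec c j L m = dec c j L m'.

Definition msg (t : Msg) (i : nat) : nat := List.nth i (msg_list t) 0.
Arguments msg t i /.
Definition link (t : Msg) (k : 'I_15) : 'I_(2 ^ n) := Ordinal (enc_lt k t).
Definition all_links (t : Msg) : {ffun 'I_15 -> 'I_(2 ^ n)} := [ffun k => link t k].
Definition good (t : Msg) : bool := ~~ error 4 15 c (msg_list t).
Definition setM1 (t : Msg) (b : 'I_s1) : Msg := (t.1.1.1, b, t.1.2, t.2).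

Lemma msg_inj t t' : (forall i, msg t i = msg t' i) -> t = t'.
Proof.
case: t => [[[a b] d] e]; case: t' => [[[a' b'] d'] e'] eq.
by congr (_, _, _, _); apply: val_inj; [exact: eq 0 | exact: eq 1 | exact: eq 2 | exact: eq 3].
Qed.

Lemma msg_setM1 t b i : msg (setM1 t b) i = if i == 1 then val b else msg t i.
Proof. by case: i => [|[|[|[|i]]]]. Qed.

Lemma link_eq (k : 'I_15) t t' :
  (forall i, S_inst k i -> msg t i = msg t' i) -> link t k = link t' k.
Proof.
move=> eq; apply: val_inj; apply: enc_local => [|i hi]; first exact/ltP.
exact: eq.
Qed.

Lemma link_eq_blind (k : 'I_15) j t t' :
  ~~ S_inst k j -> (forall i, i != j -> msg t i = msg t' i) -> link t k = link t' k.
Proof.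
move=> blind eq; apply: link_eq => i known; apply: eq.
by apply: contraNneq blind => <-.
Qed.

Lemma decode_eq j t t' : j < 4 -> good t -> good t' -> all_links t = all_links t' ->
  (forall i, A_inst j i -> msg t i = msg t' i) -> msg t j = msg t' j.
Proof.
move=> /ltP hj ok ok' el ag; apply: (decoded_eq (K := 15) dec_local) => // [|i _]; last exact: ag.
apply: links_eq => k /ltP hk.
by move/ffunP/(_ (Ordinal hk)): el; rewrite !ffunE => /(congr1 val).
Qed.

Definition same_blind2_links (t t' : Msg) : bool :=
  [forall k : 'I_15, ~~ S_inst k 2 ==> (link t k == link t' k)].

Definition m1_aliases (t : Msg) : nat := #|[set b | same_blind2_links (setM1 t b) t]|.

Definition m3_only_sender : 'I_15 := inord 7.

(* The sender [m3_only_sender] knows only message 3, so its link is a function of [t.2]: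
   leaving it out of the key is what brings the exponent down to 18. *)
Definition m3_links_key (t : Msg) : 'I_s3 * {ffun 'I_14 -> 'I_(2 ^ n)} :=
  (t.2, [ffun i => link t (lift m3_only_sender i)]).

Lemma m3_links_key_all_links t t' :
  m3_links_key t = m3_links_key t' -> all_links t = all_links t'.
Proof.
case=> e3 /ffunP el; apply/ffunP => k; rewrite !ffunE.
case: (unliftP m3_only_sender k) => [i ->|->]; first by have := el i; rewrite !ffunE.
apply: link_eq => i; rewrite /m3_only_sender inordK //.
by case: i => [|[|[|[|i]]]] //= _; rewrite e3.
Qed.

Lemma key_class_card t0 : good t0 ->
  #|[set t | good t && (m3_links_key t == m3_links_key t0)]| <= m1_aliases t0.
Proof.
move=> ok0.
have same_class t : t \in [set t | good t && (m3_links_key t == m3_links_key t0)] ->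
    [/\ good t, all_links t = all_links t0, msg t 0 = msg t0 0 & msg t 3 = msg t0 3].
  rewrite inE => /andP[ok /eqP ek]; have el := m3_links_key_all_links ek.
  have e3 : msg t 3 = msg t0 3 by case: ek => /= ->.
  split=> //; apply: decode_eq => //; case=> [|[|[|[|i]]]] //.
rewrite -(card_in_imset (f := fun t : Msg => t.1.1.2)); last first.
  move=> t t' /same_class[ok el e0 e3] /same_class[ok' el' e0' e3'] e1.
  have el'' : all_links t = all_links t' by rewrite el el'.
  have e0'' : msg t 0 = msg t' 0 by rewrite e0 e0'.
  have e1' : msg t 1 = msg t' 1 by rewrite /= e1.
  have e2 : msg t 2 = msg t' 2.
    by apply: decode_eq => //; case=> [|[|[|[|i]]]] //.
  by apply: msg_inj; case=> [|[|[|[|i]]]] //; rewrite e3 e3'.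
apply/subset_leq_card/subsetP => _ /imsetP[t /same_class[ok el e0 e3] ->].
rewrite inE; apply/forallP => k; apply/implyP => blind2.
move/ffunP/(_ k): el; rewrite !ffunE => <-; apply/eqP.
apply: (link_eq_blind blind2) => i; rewrite msg_setM1.
by case: i => [|[|[|[|i]]]].
Qed.

Lemma few_aliases_card m :
  #|[set t in [set t | good t] | m1_aliases t <= m]| <= s3 * (2 ^ n) ^ 14 * m.
Proof.
set D := [set t in _ | _].
have := @card_le_fibers _ _ m3_links_key D m.
rewrite card_prod card_ffun !card_ord; apply=> key.
case: (set_0Vmem [set t in D | m3_links_key t == key]) => [-> | [t0]]; first by rewrite cards0.
rewrite !inE => /andP[/andP[ok0 few0] /eqP <-].
apply: leq_trans few0; apply: leq_trans (key_class_card ok0).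
by apply/subset_leq_card/subsetP => t; rewrite !inE => /andP[/andP[-> _] ->].
Qed.

Definition m12_sender (i : 'I_4) : 'I_15 := inord (nth 0 [:: 5; 6; 13; 14] i).

Lemma m12_senderP (k : 'I_15) : S_inst k 1 -> S_inst k 2 -> exists i, k = m12_sender i.
Proof.
move=> h1 h2; have kin : (k : nat) \in [:: 5; 6; 13; 14].
  by move: h1 h2; case: k => k /= hk; do 15 (case: k hk => [|k] hk //).
have ki : index (k : nat) [:: 5; 6; 13; 14] < 4 by rewrite index_mem.
by exists (Ordinal ki); rewrite /m12_sender /= nth_index // inord_val.
Qed.

Definition alias_pairs : {set Msg * 'I_s1} :=
  [set p | good p.1 && same_blind2_links (setM1 p.1 p.2) p.1].

Lemma card_alias_pairs : #|alias_pairs| = \sum_(t in [set t | good t]) m1_aliases t.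
Proof.
rewrite -sum1dep_card (eq_bigr (fun t => \sum_(b | same_blind2_links (setM1 t b) t) 1)).
  by rewrite pair_big_dep; apply: eq_bigl => p; rewrite inE.
by move=> t _; rewrite sum1dep_card.
Qed.

Definition alias_pair_code (p : Msg * 'I_s1) :=
  (p.1.1.1.1, p.1.1.2, p.1.2, p.2, [ffun i => link p.1 (m12_sender i)]).

Lemma alias_pair_code_inj : {in alias_pairs &, injective alias_pair_code}.
Proof.
move=> [t b] [t' b']; rewrite !inE /= => /andP[ok /forallP al] /andP[ok' /forallP al'].
case=> e0 e2 e3 eb /ffunP e12; subst b'.
have eM1 : setM1 t b = setM1 t' b by rewrite /setM1 e0 e2 e3.
have el : all_links t = all_links t'.
  apply/ffunP => k; rewrite !ffunE.
  have [know1 | blind1] := boolP (S_inst k 1); last first.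
    apply: (link_eq_blind blind1) => -[|[|[|[|i]]]] //= _; by rewrite ?e0 ?e2 ?e3.
  have [know2 | blind2] := boolP (S_inst k 2); last first.
    move/implyP/(_ blind2)/eqP: (al k) => <-; move/implyP/(_ blind2)/eqP: (al' k) => <-.
    by rewrite eM1.
  by have [i ->] := m12_senderP know1 know2; have := e12 i; rewrite !ffunE.
have e1 : msg t 1 = msg t' 1.
  apply: decode_eq => // -[|[|[|[|i]]]] //= _; by rewrite ?e2 ?e3.
congr (_, _); apply: msg_inj => -[|[|[|[|i]]]] //=; by rewrite ?e0 ?e2 ?e3.
Qed.

Lemma alias_pairs_card : #|alias_pairs| <= s0 * s1 * s2 * s3 * (2 ^ n) ^ 4.
Proof.
rewrite -(card_in_imset alias_pair_code_inj); apply: leq_trans (max_card _) _.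
rewrite !card_prod card_ffun !card_ord; lia.
Qed.

Lemma card_msgs : #|{: Msg}| = s0 * s1 * s2 * s3.
Proof. by rewrite !card_prod !card_ord. Qed.

Lemma low_error_msg_sizes_bound : 8 * #|[set t : Msg | ~~ good t]| <= s0 * s1 * s2 * s3 -> 0 < s3 ->
  5 * (s0 * s1 * s2) <= 32 * 2 ^ (18 * n).
Proof.
move=> few_bad s3_gt0.
have B_gt0 : 0 < (2 ^ n) ^ 4 by rewrite !expn_gt0.
have bad_set : ~: [set t : Msg | good t] = [set t | ~~ good t] by apply/setP => t; rewrite !inE.
have := @count_by_threshold _ [set t | good t] m1_aliases (s3 * (2 ^ n) ^ 14) ((2 ^ n) ^ 4).
rewrite card_msgs -card_alias_pairs bad_set.
move/(_ B_gt0 few_bad few_aliases_card alias_pairs_card).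
rewrite -[s3 * _ * _]mulnA -expnD -expnM [n * _]mulnC => h.
by rewrite -(leq_pmul2l s3_gt0) mulnCA [s3 * _]mulnC [s3 * (32 * _)]mulnCA.
Qed.

End FixedCode.

Lemma Nat_pow_expn m k : Nat.pow m k = m ^ k.
Proof. by elim: k => // k IH; rewrite expnS /= IH -multE. Qed.

Lemma link_size_C_inst n k : link_size n (C_inst k) = 2 ^ n.
Proof.
rewrite /link_size /C_inst Rmult_1_r Nat_pow_expn /nfloor /Int_part.
have <- : (Z.of_nat n + 1)%Z = up (INR n).
  by apply: tech_up; rewrite plus_IZR -INR_IZR_INZ /=; lra.
by rewrite Z.add_simpl_r Nat2Z.id.
Qed.

Lemma err_prob_msgs n Rt cd :
  let s i := msg_size n (Rt i) in
  err_prob 4 15 n Rt cd =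
  Rdiv (INR #|[set t : msgs (s 0) (s 1) (s 2) (s 3) | ~~ good cd t]|)
       (INR #|{: msgs (s 0) (s 1) (s 2) (s 3)}|).
Proof.
have filter_true (l : list (list nat)) : List.filter xpredT l = l by elim: l => //= x l ->.
move=> s; rewrite /err_prob (_ : msg_sizes 4 n Rt = [:: s 0; s 1; s 2; s 3]) //.
rewrite -{2}[tuples _]filter_true !length_filter_tuples4.
by congr (Rdiv (INR _) (INR _)); apply: eq_card => t; rewrite !inE // negbK.
Qed.

Open Scope R_scope.

Lemma Rpower_bounded_nonpos (x c : R) :
  (forall N, exists n, (N <= n)%N /\ Rpower 2 (INR n * x) <= c) -> x <= 0.
Proof.
move=> bounded; apply: Rnot_lt_le => x_gt0.
have ln2_gt0 : 0 < ln 2 by have := ln_lt_2; lra.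
have xln2_gt0 : 0 < x * ln 2 by apply: Rmult_lt_0_compat.
have [N hN] := INR_unbounded (c / (x * ln 2)).
have [n [/leP/le_INR Nn bound]] := bounded N.
have : INR n * (x * ln 2) <= c.
  apply: Rle_trans bound; rewrite /Rpower -Rmult_assoc.
  by have := exp_ineq1_le (INR n * x * ln 2); lra.
have : c < INR N * (x * ln 2).
  have := Rmult_lt_compat_r _ _ _ xln2_gt0 hN.
  by rewrite /Rdiv Rmult_assoc Rinv_l; lra.
have : INR N * (x * ln 2) <= INR n * (x * ln 2) by apply: Rmult_le_compat_r; lra.
lra.
Qed.

Lemma msg_size_bounds n r : 0 <= r ->
  (0 < msg_size n r)%N /\ Rpower 2 (INR n * r) <= 2 * INR (msg_size n r).
Proof.
move=> r_ge0; set x := Rpower 2 (INR n * r).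
have x_ge1 : 1 <= x.
  rewrite /x -(Rpower_O 2); last lra.
  by apply: Rle_Rpower; [lra | apply: Rmult_le_pos => //; apply: pos_INR].
have [floor_le floor_gt] := base_Int_part x.
have floor_ge1 : 1 <= IZR (Int_part x).
  have : (0 < Int_part x)%Z by apply: lt_IZR; lra.
  by move=> pos; apply: IZR_le; lia.
have size_eq : INR (msg_size n r) = IZR (Int_part x).
  by rewrite /msg_size /nfloor -/x INR_IZR_INZ Z2Nat.id //; apply: le_IZR; lra.
by split; [apply/ltP/INR_lt; rewrite size_eq /= | rewrite size_eq]; lra.
Qed.

Lemma ratio_lt_inv8 (a b : nat) : (a <= b)%N -> INR a / INR b < / 8 -> (8 * a <= b)%N.
Proof.
case: (posnP b) => [-> | b_gt0]; first by rewrite leqn0 => /eqP ->.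
move=> _.
have b_pos : 0 < INR b by apply: lt_0_INR; apply/ltP.
move=> ratio; apply: ltnW; apply/ltP/INR_lt; rewrite -multE mult_INR /=.
by have := Rmult_lt_compat_r _ _ _ b_pos ratio; rewrite /Rdiv Rmult_assoc Rinv_l; lra.
Qed.

Lemma INR_expn2 k : INR (2 ^ k)%N = 2 ^ k.
Proof. by elim: k => // k IH; rewrite expnS -multE mult_INR IH /=; lra. Qed.

Lemma Rpower_rate_sum n a b d :
  Rpower 2 (INR n * (a + b + d - 18)) =
  Rpower 2 (INR n * a) * Rpower 2 (INR n * b) * Rpower 2 (INR n * d) / 2 ^ (18 * n).
Proof.
rewrite -Rpower_pow; last lra.
rewrite /Rdiv -Rpower_Ropp -!Rpower_plus -multE mult_INR; congr Rpower; simpl (INR 18); ring.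
Qed.

Lemma sum_rate_bound_at Rt cd n :
  (forall j, (j < 4)%coq_nat -> 0 <= Rt j) ->
  valid_code 4 15 S_inst A_inst C_inst n Rt cd -> err_prob 4 15 n Rt cd < / 8 ->
  Rpower 2 (INR n * (Rt 0%N + Rt 1%N + Rt 2%N - 18)) <= 52.
Proof.
move=> Rt_ge0 [enc_local [enc_lt dec_local]] err_small.
have [_ size0] := msg_size_bounds n (Rt_ge0 0%N ltac:(lia)).
have [_ size1] := msg_size_bounds n (Rt_ge0 1%N ltac:(lia)).
have [_ size2] := msg_size_bounds n (Rt_ge0 2%N ltac:(lia)).
have [s3_gt0 _] := msg_size_bounds n (Rt_ge0 3%N ltac:(lia)).
have enc_lt' (k : 'I_15) t : (enc cd k (@msg_list (msg_size n (Rt 0%N)) (msg_size n (Rt 1%N))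
    (msg_size n (Rt 2%N)) (msg_size n (Rt 3%N)) t) < 2 ^ n)%N.
  rewrite -(link_size_C_inst n k); apply/ltP/enc_lt; [exact/ltP | exact: msg_list_in_tuples].
rewrite err_prob_msgs in err_small.
have := ratio_lt_inv8 (max_card _) err_small; rewrite card_msgs => few_bad.
have := low_error_msg_sizes_bound enc_local enc_lt' dec_local few_bad s3_gt0.
move=> /leP/le_INR; rewrite -!multE !mult_INR multE INR_expn2 [INR 5]/= [INR 32]/= => rates.
have pow_pos : 0 < 2 ^ (18 * n) by apply: pow_lt; lra.
have prod_le : Rpower 2 (INR n * Rt 0%N) * Rpower 2 (INR n * Rt 1%N) * Rpower 2 (INR n * Rt 2%N)
    <= 8 * (INR (msg_size n (Rt 0%N)) * INR (msg_size n (Rt 1%N)) * INR (msg_size n (Rt 2%N))).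
  have Rpower_ge0 x : 0 <= Rpower 2 x by left; apply: exp_pos.
  apply: Rle_trans (_ : _ <= 2 * INR (msg_size n (Rt 0%N)) * (2 * INR (msg_size n (Rt 1%N)))
                            * (2 * INR (msg_size n (Rt 2%N)))) _; last by right; ring.
  by apply: Rmult_le_compat => //; [apply: Rmult_le_pos | apply: Rmult_le_compat].
rewrite Rpower_rate_sum /Rdiv; apply: (Rmult_le_reg_r _ _ _ pow_pos).
rewrite Rmult_assoc Rinv_l; lra.
Qed.

Theorem mainTheorem5 (Rt : nat -> R) :
  achievable 4 15 S_inst A_inst C_inst Rt ->
  Rt 0%nat + Rt 1%nat + Rt 2%nat <= 18.
Proof.
move=> [Rt_ge0 [codes [valid err_cv]]].
suff : Rt 0%N + Rt 1%N + Rt 2%N - 18 <= 0 by lra.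
apply: (@Rpower_bounded_nonpos _ 52) => N.
have [M err_small] := err_cv (/ 8) ltac:(lra).
exists (maxn N M); split; first exact: leq_maxl.
apply: sum_rate_bound_at (valid _) _ => //.
have := err_small (maxn N M) (leP (leq_maxr N M)).
by rewrite /R_dist Rminus_0_r; apply: Rle_lt_trans (Rle_abs _).
Qed.
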